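(* Let $(\mathcal{A},e)$ be an order-unit space and $L$ any Lipschitz seminorm on $\mathcal{A}$, with metric $\rho_L$ on $S(\mathcal{A})$. For $a\in\mathcal{A}$ set $$L_{\rho_L}(a)=\sup\{|\mu(a)-\nu(a)|/\rho_L(\mu,\nu):\ \mu,\nu\in S(\mathcal{A}),\ \mu\ne\nu\}.$$ Then $\{a\in\mathcal{A}: L_{\rho_L}(a)\le 1\}$ coincides with the norm closure in $\mathcal{A}$ of $\mathcal{L}_1=\{a\in\mathcal{A}: L(a)\le1\}$. In particular, $L_{\rho_L}$ is the largest lower semicontinuous seminorm on $\mathcal{A}$ which is $\le L$, and $\rho_{L_{\rho_L}}=\rho_L$.
   Context: An order-unit space is a real partially ordered vector space $\mathcal{A}$ with a distinguished element $e$ such that (i) for each $a$ there is $r\in\mathbb{R}$ with $a\le re$, and (ii) if $a\le re$ for all $r>0$ then $a\le0$; norm $\|a\|=\inf\{r\ge0:-re\le a\le re\}$ (not necessarily complete). A state is a continuous linear functional $\mu$ with $\mu(e)=1=\|\mu\|$; $S(\mathcal{A})$ is the set of states. A Lipschitz seminorm is a finite-valued seminorm $L$ on $\mathcal{A}$ with $L(a)=0$ iff $a\in\mathbb{R}e$. For a seminorm $M$ on $\mathcal{A}$ (possibly $+\infty$-valued) set $\rho_M(\mu,\nu)=\sup\{|\mu(a)-\nu(a)|: M(a)\le1\}\in[0,\infty]$. A seminorm is lower semicontinuous if $\{a: M(a)\le1\}$ is norm-closed. In the supremum defining $L_{\rho_L}$, quotients with denominator $+\infty$ are taken to be $0$.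 *)

From HB Require Import structures.
From mathcomp Require Import all_boot all_order all_algebra.
From mathcomp Require Import all_classical all_reals all_analysis.
Set Implicit Arguments. Unset Strict Implicit. Unset Printing Implicit Defensive.
Import Order.TTheory GRing.Theory Num.Theory.
Local Open Scope classical_set_scope.
Local Open Scope ring_scope.

Section OUS.
Variables (R : realType) (V : lmodType R).

Definition order_unit_space (le : V -> V -> Prop) (e : V) : Prop :=
  (forall a, le a a) /\
  (forall a b, le a b -> le b a -> a = b) /\
  (forall a b c, le a b -> le b c -> le a c) /\
  (forall a b c, le a b -> le (a + c) (b + c)) /\
  (forall a b (r : R), 0 <= r -> le a b -> le (r *: a) (r *: b)) /\
  (forall a, exists r : R, le a (r *: e)) /\
  (forall a, (forall r : R, 0 < r -> le a (r *: e)) -> le a 0).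

Definition ou_norm (le : V -> V -> Prop) (e : V) (a : V) : R :=
  inf [set r : R | 0 <= r /\ le (- (r *: e)) a /\ le a (r *: e)].

(* states: continuous (= bounded for the order-unit norm) linear functionals
   mu with mu e = 1 = ||mu|| (operator norm). *)
Definition is_state (le : V -> V -> Prop) (e : V) (mu : V -> R) : Prop :=
  [/\ (forall (r : R) a b, mu (r *: a + b) = r * mu a + mu b),
      (exists C : R, forall a, `|mu a| <= C * ou_norm le e a),
      mu e = 1 &
      sup [set `|mu a| | a in [set a | ou_norm le e a <= 1]] = 1].

Definition states (le : V -> V -> Prop) (e : V) : set (V -> R) :=
  [set mu | is_state le e mu].

Definition lipschitz_seminorm (e : V) (L : V -> R) : Prop :=
  [/\ (forall a b, L (a + b) <= L a + L b),
      (forall (r : R) a, L (r *: a) = `|r| * L a) &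
      (forall a, L a = 0 <-> exists r : R, a = r *: e)].

Definition ext_seminorm (M : V -> \bar R) : Prop :=
  [/\ (forall a, lee 0%E (M a)),
      (forall a b : V, lee (M (a + b)) (adde (M a) (M b))) &
      (forall (r : R) a, M (r *: a) = mule (`|r|%:E) (M a))].

Definition rho (M : V -> \bar R) (mu nu : V -> R) : \bar R :=
  ereal_sup [set (`|mu a - nu a|)%:E | a in [set a | lee (M a) 1%E]].

(* |x| / d with the convention |x| / +oo = 0 *)
Definition quot (x : R) (d : \bar R) : \bar R :=
  match d with
  | r%:E => (`|x| / r)%:E
  | _ => 0%E
  end.

(* L_rho(a) = sup { |mu a - nu a| / rho(mu,nu) : mu, nu states, mu <> nu }
   (supremum of the empty family taken to be 0). *)
Definition L_of_rho (le : V -> V -> Prop) (e : V) (rh : (V -> R) -> (V -> R) -> \bar R)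
  (a : V) : \bar R :=
  ereal_sup (0%E |` [set q | exists mu nu : V -> R,
     [/\ states le e mu, states le e nu, mu <> nu &
          q = quot (mu a - nu a) (rh mu nu)]]).

Definition norm_closure (le : V -> V -> Prop) (e : V) (B : set V) : set V :=
  [set a | forall eps : R, 0 < eps -> exists2 b, B b & ou_norm le e (a - b) < eps].

Definition ou_lsc (le : V -> V -> Prop) (e : V) (M : V -> \bar R) : Prop :=
  norm_closure le e [set a | lee (M a) 1%E] `<=` [set a | lee (M a) 1%E].

End OUS.

(* The unit ball of [L_rho] consists of the elements that are 1-Lipschitz for
   [rho_L] on the state space; it contains the unit ball of [L] and is norm
   closed because states are norm continuous.  Conversely, if [a] lies at
   distance [eps > 0] from the unit ball of [L], a Hahn-Banach argument gives a
   linear functional [phi] with [|phi| <= L], bounded for the order-unit norm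
   and with [phi a > 1]; a second Hahn-Banach argument writes [phi = psi - chi]
   with [psi] and [chi] positive, and [phi e = 0] forces [psi e = chi e = t > 0].
   The states [psi / t] and [chi / t] are at [rho_L]-distance at most [1 / t]
   but differ by more than [1 / t] at [a], so [L_rho a > 1].  Maximality and
   [rho_(L_rho) = rho_L] follow formally from this description of the ball. *)

From HB Require Import structures.
From mathcomp Require Import all_boot all_order all_algebra.
From mathcomp Require Import all_classical all_reals all_analysis.
From mathcomp Require Import lra.
Import Order.TTheory GRing.Theory Num.Theory.
Local Open Scope classical_set_scope.
Local Open Scope ring_scope.
Set Implicit Arguments. Unset Strict Implicit. Unset Printing Implicit Defensive.

Section ScalarFun.
Variables (R : comPzRingType) (V : lmodType R) (f : V -> R).
Hypothesis f_scalar : scalar f.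

Lemma scalar_funB x y : f (x - y) = f x - f y.
Proof. exact: (@zmod_morphism_linear _ _ _ *%R f f_scalar). Qed.

Lemma scalar_funZ (a : R) x : f (a *: x) = a * f x.
Proof. exact: (@scalable_linear _ _ _ *%R f f_scalar). Qed.

Lemma scalar_fun0 : f 0 = 0.
Proof. by rewrite -(subrr 0) scalar_funB subrr. Qed.

Lemma scalar_funN x : f (- x) = - f x.
Proof. by rewrite -sub0r scalar_funB scalar_fun0 sub0r. Qed.

Lemma scalar_funD x y : f (x + y) = f x + f y.
Proof. by rewrite -[in LHS](opprK y) scalar_funB scalar_funN opprK. Qed.

End ScalarFun.

Section HahnBanach.
Variables (R : realType) (V : lmodType R) (U : V -> set R).

(* [U x m] stands for [p x <= m], [p] a sublinear functional; working with
   the relation avoids having to show that [inf (U x)] is finite. *)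
Hypothesis U_total : forall x, exists m, U x m.
Hypothesis UD : forall x y m n, U x m -> U y n -> U (x + y) (m + n).
Hypothesis UZ : forall t x m, 0 < t -> U x m -> U (t *: x) (t * m).
Hypothesis U0_ge0 : forall m, U 0 m -> 0 <= m.

Definition dominated_graph (G : set (V * R)) :=
  [/\ (forall x r y s, G (x, r) -> G (y, s) -> G (x + y, r + s)),
      (forall t x r, G (x, r) -> G (t *: x, t * r)),
      (forall x r s, G (x, r) -> G (x, s) -> r = s) &
      (forall x r m, G (x, r) -> U x m -> r <= m)].

Lemma dominated_graph_bigcup (F : set (set (V * R))) :
  F `<=` dominated_graph -> total_on F subset ->
  dominated_graph (\bigcup_(G in F) G).
Proof.
move=> Fdom Ftot; split.
- move=> x r y s [A FA Axr] [B FB Bys].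
  have [AB|BA] := Ftot _ _ FA FB.
  + by exists B => //; have [BD _ _ _] := Fdom _ FB; exact: BD (AB _ Axr) Bys.
  + by exists A => //; have [AD _ _ _] := Fdom _ FA; exact: AD Axr (BA _ Bys).
- move=> t x r [A FA Axr]; exists A => //.
  by have [_ AZ _ _] := Fdom _ FA; exact: AZ.
- move=> x r s [A FA Axr] [B FB Bxs].
  have [AB|BA] := Ftot _ _ FA FB.
  + by have [_ _ Bfun _] := Fdom _ FB; exact: Bfun (AB _ Axr) Bxs.
  + by have [_ _ Afun _] := Fdom _ FA; exact: Afun Axr (BA _ Bxs).
- move=> x r m [A FA Axr].
  by have [_ _ _ Adom] := Fdom _ FA; exact: Adom.
Qed.

Lemma dominated_graph00 : dominated_graph [set (0, 0)].
Proof.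
split.
- by move=> x r y s [-> ->] [-> ->]; rewrite !addr0.
- by move=> t x r [-> ->]; rewrite scaler0 mulr0.
- by move=> x r s [_ ->] [_ ->].
- by move=> x r m [-> ->]; apply: U0_ge0.
Qed.

Section Extension.
Variables (G : set (V * R)) (x0 : V) (c : R).
Hypothesis G_dom : dominated_graph G.
Hypothesis c_ge : forall z s m, G (z, s) -> U (z - x0) m -> s - m <= c.
Hypothesis c_le : forall z s m, G (z, s) -> U (z + x0) m -> c <= m - s.

Definition graph_extension :=
  [set p | exists y r l, G (y, r) /\ p = (y + l *: x0, r + l * c)].

Lemma graph_extension_dominated y s l m :
  G (y, s) -> U (y + l *: x0) m -> s + l * c <= m.
Proof.
case: G_dom => _ GZ _ Gdom Gys.
have [l0|l0|->] := ltgtP l 0; last by rewrite scale0r addr0 mul0r addr0; exact: Gdom.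
- have nl : 0 < - l by rewrite oppr_gt0.
  have il : 0 < (- l)^-1 by rewrite invr_gt0.
  have il_l : (- l)^-1 * l = -1 by rewrite invrN mulNr mulVf ?lt_eqF.
  move=> /(UZ il); rewrite scalerDr scalerA il_l scaleN1r.
  move=> /(c_ge (GZ _ _ _ Gys)); rewrite -mulrBr => /(ler_wpM2l (ltW nl)).
  by rewrite mulrA mulfV ?gt_eqF // mul1r mulNr; lra.
- have il : 0 < l^-1 by rewrite invr_gt0.
  move=> /(UZ il); rewrite scalerDr scalerA mulVf ?gt_eqF // scale1r.
  move=> /(c_le (GZ _ _ _ Gys)); rewrite -mulrBr => /(ler_wpM2l (ltW l0)).
  by rewrite mulrA mulfV ?gt_eqF // mul1r; lra.
Qed.

Lemma dominated_graph_extension :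
  (forall r, ~ G (x0, r)) -> dominated_graph graph_extension.
Proof.
move=> x0_notin; case: G_dom => GD GZ Gfun _; split.
- move=> _ _ _ _ [y1 [r1 [l1 [G1 [-> ->]]]]] [y2 [r2 [l2 [G2 [-> ->]]]]].
  exists (y1 + y2), (r1 + r2), (l1 + l2); split; first exact: GD.
  by rewrite scalerDl mulrDl; congr (_, _); rewrite addrACA.
- move=> t _ _ [y [r [l [Gyr [-> ->]]]]].
  exists (t *: y), (t * r), (t * l); split; first exact: GZ.
  by rewrite scalerDr scalerA mulrDr mulrA.
- move=> x r s [y1 [r1 [l1 [G1 [-> ->]]]]] [y2 [r2 [l2 [G2 [+ ->]]]]].
  have [<- /(congr1 (fun v => v - l1 *: x0))|l12 ey] := eqVneq l1 l2.
    by rewrite !addrK => y12; rewrite (Gfun _ _ _ G1 (_ : G (y1, r2))) // y12.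
  have y12 : y1 - y2 = (l2 - l1) *: x0.
    have -> : y1 = y2 + l2 *: x0 - l1 *: x0 by rewrite -ey addrK.
    by rewrite scalerBl addrAC [y2 + _]addrC addrK.
  have G12 : G (y1 - y2, r1 - r2).
    by apply: GD G1 _; move: (GZ (-1) _ _ G2); rewrite scaleN1r mulN1r.
  case: (x0_notin ((l2 - l1)^-1 * (r1 - r2))).
  by move: (GZ (l2 - l1)^-1 _ _ G12); rewrite y12 scalerA mulVf ?scale1r // subr_eq0 eq_sym.
- by move=> _ _ m [y [r [l [Gyr [-> ->]]]]]; apply: graph_extension_dominated.
Qed.

End Extension.

Lemma extension_value G x0 : dominated_graph G -> G (0, 0) ->
  exists c, (forall z s m, G (z, s) -> U (z - x0) m -> s - m <= c) /\
            (forall z s m, G (z, s) -> U (z + x0) m -> c <= m - s).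
Proof.
case=> GD _ _ Gdom G00.
pose A := [set v | exists z s m, [/\ G (z, s), U (z - x0) m & v = s - m]].
have A_le z s m v : G (z, s) -> U (z + x0) m -> A v -> v <= m - s.
  move=> Gzs Um [z' [s' [m' [Gzs' Um' ->]]]].
  have := UD Um' Um; rewrite addrACA addNr addr0 => /(Gdom _ _ _ (GD _ _ _ _ Gzs' Gzs)).
  lra.
have [m1 Um1] := U_total (0 - x0); have [m2 Um2] := U_total (0 + x0).
have A_sup : has_sup A.
  split; first by exists (0 - m1), 0, 0, m1.
  by exists (m2 - 0) => v; apply: A_le Um2.
exists (sup A); split.
- by move=> z s m Gzs Um; apply: sup_upper_bound => //; exists z, s, m.
- move=> z s m Gzs Um; apply: ge_sup; first by case: A_sup.
  by move=> v; apply: A_le Um.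
Qed.

Theorem hahn_banach_dominated :
  exists psi : V -> R, scalar psi /\ forall x m, U x m -> psi x <= m.
Proof.
have [G [G_dom G_max]] := Zorn_bigcup dominated_graph_bigcup.
have G00 : G (0, 0).
  have [[[x r] Gxr]|G0] := pselect (G !=set0).
    by case: G_dom => _ GZ _ _; move: (GZ 0 _ _ Gxr); rewrite scale0r mul0r.
  exfalso; apply: (G_max [set (0, 0)]) dominated_graph00.
  split; first by move=> p Gp; case: G0; exists p.
  by move=> /(_ (0, 0) erefl) G00; case: G0; exists (0, 0).
have G_total x0 : exists r, G (x0, r).
  apply: contrapT => x0_notin.
  have {}x0_notin r : ~ G (x0, r) by move=> Gr; apply: x0_notin; exists r.
  have [c [c_ge c_le]] := extension_value x0 G_dom G00.
  apply: (G_max (graph_extension G x0 c)); last exact: dominated_graph_extension.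
  split.
    by move=> [y r] Gyr; exists y, r, 0; rewrite scale0r mul0r !addr0.
  move=> /(_ (x0, c)) ext_sub; apply: (x0_notin c); apply: ext_sub.
  by exists 0, 0, 1; rewrite scale1r mul1r !add0r.
have [psi Gpsi] := choice G_total.
case: G_dom => GD GZ Gfun Gdom.
exists psi; split; last by move=> x m; apply: Gdom.
by move=> t x y; apply: Gfun (Gpsi _) _; apply: GD (GZ _ _ _ (Gpsi _)) (Gpsi _).
Qed.

End HahnBanach.

Section Quot.
Variable R : realType.

Lemma le_quotD (x y : R) d : (0 <= d)%E ->
  (quot (x + y) d <= quot x d + quot y d)%E.
Proof.
case: d => [r| |] //= r0; rewrite ?adde0 //.
rewrite -EFinD lee_fin -mulrDl; apply: ler_wpM2r; last exact: ler_normD.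
by rewrite invr_ge0 -lee_fin.
Qed.

Lemma quotMl (t x : R) d : quot (t * x) d = (`|t|%:E * quot x d)%E.
Proof. by case: d => [r| |] /=; rewrite ?mule0 // -EFinM normrM mulrA. Qed.

End Quot.

Section LipschitzSeminorm.
Variables (R : realType) (V : lmodType R) (e : V) (L : V -> R).
Hypothesis L_lip : lipschitz_seminorm e L.

Lemma lipD a b : L (a + b) <= L a + L b.
Proof. by case: L_lip. Qed.

Lemma lipZ (r : R) a : L (r *: a) = `|r| * L a.
Proof. by case: L_lip. Qed.

Lemma lip0 : L 0 = 0.
Proof. by rewrite -(scale0r 0) lipZ normr0 mul0r. Qed.

Lemma lipN a : L (- a) = L a.
Proof. by rewrite -scaleN1r lipZ normrN normr1 mul1r. Qed.

Lemma lip_ge0 a : 0 <= L a.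
Proof. by have := lipD a (- a); rewrite subrr lip0 lipN; lra. Qed.

Lemma lip_unit (r : R) : L (r *: e) = 0.
Proof. by case: L_lip => _ _ ->; exists r. Qed.

Lemma lip_eq0 a : L a = 0 -> exists r : R, a = r *: e.
Proof. by case: L_lip => _ _ ->. Qed.

Lemma lip_normalize a : 0 < L a -> L ((L a)^-1 *: a) = 1.
Proof. by move=> La; rewrite lipZ ger0_norm ?invr_ge0 ?(ltW La) // mulVf ?gt_eqF. Qed.

End LipschitzSeminorm.

Section OrderUnitSpace.
Variables (R : realType) (V : lmodType R) (le : V -> V -> Prop) (e : V).
Hypothesis ous : order_unit_space le e.

Lemma ou_refl a : le a a.
Proof. by case: ous. Qed.

Lemma ou_trans a b c : le a b -> le b c -> le a c.
Proof. by case: ous => _ [_ [+ _]]; apply. Qed.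

Lemma ou_addr a b c : le a b -> le (a + c) (b + c).
Proof. by case: ous => _ [_ [_ [+ _]]]; apply. Qed.

Lemma ou_scale a b (r : R) : 0 <= r -> le a b -> le (r *: a) (r *: b).
Proof. by case: ous => _ [_ [_ [_ [+ _]]]]; apply. Qed.

Lemma ou_unit a : exists r : R, le a (r *: e).
Proof. by case: ous => _ [_ [_ [_ [_ [+ _]]]]]; apply. Qed.

Lemma ou_arch a : (forall r : R, 0 < r -> le a (r *: e)) -> le a 0.
Proof. by case: ous => _ [_ [_ [_ [_ [_ +]]]]]; apply. Qed.

Lemma ou_add a b c d : le a b -> le c d -> le (a + c) (b + d).
Proof.
move=> ab cd; apply: ou_trans (ou_addr c ab) _.
by rewrite ![b + _]addrC; apply: ou_addr.
Qed.

Lemma ou_subr_le0 a b : le a b -> le (a - b) 0.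
Proof. by move=> ab; rewrite -(subrr b); apply: ou_addr. Qed.

Lemma ou_le0_subr a b : le (a - b) 0 -> le a b.
Proof. by move=> /(ou_addr b); rewrite subrK add0r. Qed.

Lemma ou_opp a b : le a b -> le (- b) (- a).
Proof.
move=> /(ou_addr (- a - b)).
by rewrite addrA subrr add0r addrCA subrr addr0.
Qed.

Definition bounded_by (r : R) (x : V) := le (- (r *: e)) x /\ le x (r *: e).

Lemma bounded_byZ (t r : R) x : 0 <= t -> bounded_by r x -> bounded_by (t * r) (t *: x).
Proof.
move=> t0 [lo hi]; rewrite /bounded_by -scalerA -scalerN.
by split; apply: ou_scale.
Qed.

Lemma bounded_byD r s x y :
  bounded_by r x -> bounded_by s y -> bounded_by (r + s) (x + y).
Proof.
move=> [lo1 hi1] [lo2 hi2]; rewrite /bounded_by scalerDl opprD.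
by split; apply: ou_add.
Qed.

Lemma bounded_by0 : bounded_by 0 0.
Proof. by rewrite /bounded_by scale0r oppr0; split; apply: ou_refl. Qed.

Local Notation N := (ou_norm le e).

Lemma ou_norm_le r x : 0 <= r -> bounded_by r x -> N x <= r.
Proof. by move=> r0 [lo hi]; apply: ge_inf => //; exists 0 => y []. Qed.

Lemma ou_norm_ge0 x : 0 <= N x.
Proof.
have [S0|] := pselect ([set r : R | 0 <= r /\ le (- (r *: e)) x /\ le x (r *: e)] !=set0).
  by apply: lb_le_inf S0 _ => r [].
by move/set0P/negP/negPn/eqP; rewrite /ou_norm => ->; rewrite inf0.
Qed.

(* Without [le 0 e] the order interval [[-r e, r e]] is empty for [r > 0]. *)
Lemma ou_norm_degenerate x : ~ le 0 e -> N x = 0.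
Proof.
move=> e_not_ge0; rewrite /ou_norm.
have sub : [set r : R | 0 <= r /\ le (- (r *: e)) x /\ le x (r *: e)] `<=` [set 0].
  move=> r [r0 [lo hi]]; apply/eqP; rewrite eq_le r0 andbT leNgt; apply/negP => rp.
  apply: e_not_ge0; have := ou_addr (r *: e) (ou_trans lo hi).
  have ir : 0 <= (r + r)^-1 by rewrite invr_ge0 ltW // addr_gt0.
  rewrite addNr -scalerDl => /(ou_scale ir).
  by rewrite scaler0 scalerA mulVf ?gt_eqF ?addr_gt0 // scale1r.
by have [->|->] := subset_set1 sub; [exact: inf0|exact: inf1].
Qed.

Section PositiveUnit.
Hypothesis e_ge0 : le 0 e.

Lemma le_scale_unit (r s : R) : r <= s -> le (r *: e) (s *: e).
Proof.
rewrite -subr_ge0 => /ou_scale /(_ e_ge0) /(ou_addr (r *: e)).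
by rewrite scaler0 add0r -scalerDl subrK.
Qed.

Lemma bounded_by_exists x : exists2 r, 0 <= r & bounded_by r x.
Proof.
have [r1 hi] := ou_unit x; have [r2 lo] := ou_unit (- x).
exists (`|r1| + `|r2|); first by rewrite addr_ge0.
split.
- rewrite -[x]opprK; apply: ou_opp; apply: ou_trans lo (le_scale_unit _).
  by rewrite (le_trans (ler_norm r2)) // lerDr.
- apply: ou_trans hi (le_scale_unit _).
  by rewrite (le_trans (ler_norm r1)) // lerDl.
Qed.

Lemma ou_norm_bounded x : bounded_by (N x) x.
Proof.
set S := [set r : R | 0 <= r /\ le (- (r *: e)) x /\ le x (r *: e)].
have S_inf : has_inf S.
  split; first by have [r r0 [lo hi]] := bounded_by_exists x; exists r.
  by exists 0 => y [].
have le_inf y : (forall r, S r -> le y (r *: e)) -> le y (N x *: e).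
  move=> Sy; apply: ou_le0_subr; apply: ou_arch => d d0.
  have [r Sr r_lt] := inf_adherent d0 S_inf.
  have := ou_addr (- (N x *: e)) (ou_trans (Sy _ Sr) (le_scale_unit (ltW r_lt))).
  by rewrite scalerDl addrAC subrr add0r.
split; last by apply: le_inf => r [_ []].
rewrite -[X in le _ X]opprK; apply: ou_opp; apply: le_inf => r [_ [lo _]].
by rewrite -[_ *: e]opprK; apply: ou_opp.
Qed.

Lemma ou_norm_unit : N e <= 1.
Proof.
apply: ou_norm_le => //; rewrite /bounded_by scale1r; split; last exact: ou_refl.
by apply: ou_trans e_ge0; rewrite -oppr0; apply: ou_opp.
Qed.

Definition positive_functional (f : V -> R) := forall x, le x 0 -> f x <= 0.

Section Positive.
Variable f : V -> R.
Hypotheses (f_scalar : scalar f) (f_pos : positive_functional f).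

Lemma positive_bound r x : bounded_by r x -> `|f x| <= r * f e.
Proof.
move=> [lo hi]; rewrite ler_norml.
have := f_pos (ou_subr_le0 lo); have := f_pos (ou_subr_le0 hi).
rewrite !(scalar_funB f_scalar) (scalar_funN f_scalar) !(scalar_funZ f_scalar).
lra.
Qed.

Lemma positive_unit_ge0 : 0 <= f e.
Proof.
have := ou_opp e_ge0; rewrite oppr0 => /f_pos.
by rewrite (scalar_funN f_scalar); lra.
Qed.

Lemma state_of_positive : 0 < f e -> is_state le e (fun x => f x / f e).
Proof.
move=> fe0; split.
- by move=> r x y; rewrite f_scalar mulrDl mulrA.
- exists 1 => x; rewrite mul1r normrM normfV (gtr0_norm fe0) ler_pdivrMr //.
  exact: positive_bound (ou_norm_bounded x).
- by rewrite mulfV ?gt_eqF.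
set B := [set _ | _ in _].
have B_e : B 1 by exists e; [exact: ou_norm_unit|rewrite mulfV ?gt_eqF ?normr1].
have B_le1 : ubound B 1.
  move=> _ [x Nx <-]; rewrite normrM normfV (gtr0_norm fe0) ler_pdivrMr //.
  exact: le_trans (positive_bound (ou_norm_bounded x)) (ler_wpM2r (ltW fe0) Nx).
apply/le_anti/andP; split; first by apply: ge_sup B_le1; exists 1.
have B_sup : has_sup B by split; [exists 1|exists 1].
exact: sup_upper_bound B_sup _ B_e.
Qed.

End Positive.

Section PositiveDecomposition.
Variables (phi : V -> R) (D : R).
Hypothesis phi_scalar : scalar phi.
Hypothesis phi_le : forall x r, 0 <= r -> bounded_by r x -> phi x <= D * r.

(* [split_gauge x m] encodes [p x <= m] for the sublinear
   [p x = inf {D (r1 + r2) + phi (x - x1) | x1 <= r1 e, x - x1 <= r2 e}];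
   a linear functional below [p] is positive (take [x1 = x]) and below [phi]
   on the negative cone (take [x1 = 0]). *)
Definition split_gauge x m := exists x1 r1 r2, [/\ 0 <= r1, 0 <= r2,
  le x1 (r1 *: e), le (x - x1) (r2 *: e) & D * (r1 + r2) + phi (x - x1) <= m].

Let le0_unit x : le x 0 -> le x (0 *: e).
Proof. by rewrite scale0r. Qed.

Lemma split_gauge_total x : exists m, split_gauge x m.
Proof.
have [r r0 [_ hi]] := bounded_by_exists x.
exists (D * (r + 0) + phi (x - x)), x, r, 0; split => //.
by rewrite subrr; apply: le0_unit; apply: ou_refl.
Qed.

Lemma split_gaugeD x y m n :
  split_gauge x m -> split_gauge y n -> split_gauge (x + y) (m + n).
Proof.
move=> [x1 [r1 [r2 [r10 r20 le1 le2 xm]]]] [y1 [s1 [s2 [s10 s20 le1' le2' yn]]]].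
have xyE : x + y - (x1 + y1) = (x - x1) + (y - y1) by rewrite opprD addrACA.
exists (x1 + y1), (r1 + s1), (r2 + s2); split.
- by rewrite addr_ge0.
- by rewrite addr_ge0.
- by rewrite scalerDl; apply: ou_add.
- by rewrite xyE scalerDl; apply: ou_add.
- by rewrite xyE (scalar_funD phi_scalar); lra.
Qed.

Lemma split_gaugeZ t x m : 0 < t -> split_gauge x m -> split_gauge (t *: x) (t * m).
Proof.
move=> t0 [x1 [r1 [r2 [r10 r20 le1 le2 xm]]]].
exists (t *: x1), (t * r1), (t * r2); rewrite -scalerBr; split.
- by apply: mulr_ge0 => //; apply: ltW.
- by apply: mulr_ge0 => //; apply: ltW.
- by rewrite -scalerA; apply: ou_scale => //; apply: ltW.
- by rewrite -scalerA; apply: ou_scale => //; apply: ltW.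
- by rewrite (scalar_funZ phi_scalar) -mulrDr mulrCA -mulrDr ler_pM2l.
Qed.

Lemma split_gauge0_ge0 m : split_gauge 0 m -> 0 <= m.
Proof.
move=> [x1 [r1 [r2 [r10 r20 le1 le2 xm]]]]; rewrite sub0r in le2 xm.
have x1_bd : bounded_by (r1 + r2) x1.
  split; last by apply: ou_trans le1 (le_scale_unit _); lra.
  rewrite -[X in le _ X]opprK; apply: ou_opp.
  by apply: ou_trans le2 (le_scale_unit _); lra.
have := phi_le (addr_ge0 r10 r20) x1_bd.
by rewrite (scalar_funN phi_scalar) in xm; lra.
Qed.

Lemma bounded_functional_split : exists2 psi, scalar psi &
  positive_functional psi /\ positive_functional (fun x => psi x - phi x).
Proof.
have [psi [psi_scalar psi_le]] := hahn_banach_dominated split_gauge_total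
  split_gaugeD split_gaugeZ split_gauge0_ge0.
exists psi => //; split => x x_le0.
- apply: le_trans (psi_le x (D * (0 + 0) + phi (x - x)) _) _.
    by exists x, 0, 0; split; rewrite ?subrr ?lexx //; apply: le0_unit => //; apply: ou_refl.
  by rewrite subrr (scalar_fun0 phi_scalar) !addr0 mulr0.
- rewrite subr_le0; apply: le_trans (psi_le x (D * (0 + 0) + phi (x - 0)) _) _.
    by exists 0, 0, 0; split; rewrite ?subr0 ?lexx //; apply: le0_unit => //; apply: ou_refl.
  by rewrite subr0 addr0 mulr0 add0r.
Qed.

End PositiveDecomposition.

End PositiveUnit.

Lemma state_scalar mu : states le e mu -> scalar mu.
Proof. by case. Qed.

Lemma state_unit mu : states le e mu -> mu e = 1.
Proof. by case. Qed.

Lemma state_bounded mu : states le e mu -> exists C : R, forall a, `|mu a| <= C * N a.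
Proof. by case. Qed.

Lemma norm_closureS (A B : set V) :
  A `<=` B -> norm_closure le e A `<=` norm_closure le e B.
Proof. by move=> AB a a_cl d d0; have [b Ab ab] := a_cl d d0; exists b => //; apply: AB. Qed.

End OrderUnitSpace.

Section LipschitzDual.
Variables (R : realType) (V : lmodType R) (le : V -> V -> Prop) (e : V) (L : V -> R).
Hypotheses (ous : order_unit_space le e) (L_lip : lipschitz_seminorm e L).

Local Notation N := (ou_norm le e).
Local Notation states := (states le e).
Let LE := fun a => (L a)%:E.
Let Lr := L_of_rho le e (rho LE).

Lemma rho_ge mu nu a : L a <= 1 -> (`|mu a - nu a|%:E <= rho LE mu nu)%E.
Proof. by move=> La; apply: ereal_sup_ubound; exists a => //; rewrite /LE lee_fin. Qed.

Lemma rho_ge0 mu nu : states mu -> states nu -> (0 <= rho LE mu nu)%E.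
Proof.
move=> smu snu; apply: le_trans (rho_ge mu nu (a := 0) _); last by rewrite (lip0 L_lip).
by rewrite (scalar_fun0 (state_scalar smu)) (scalar_fun0 (state_scalar snu)) subrr normr0.
Qed.

Lemma rho_eq0 mu nu : states mu -> states nu -> rho LE mu nu = 0%:E -> mu = nu.
Proof.
move=> smu snu rho0; have mu_nu b : L b <= 1 -> mu b = nu b.
  move=> /(rho_ge mu nu); rewrite rho0 lee_fin normr_le0 subr_eq0.
  by move/eqP.
apply/funext => b; have [|Lb] := lerP (L b) 1; first exact: mu_nu.
have Lb0 : 0 < L b by lra.
have := mu_nu ((L b)^-1 *: b); rewrite (lip_normalize L_lip Lb0) lexx => /(_ isT).
rewrite (scalar_funZ (state_scalar smu)) (scalar_funZ (state_scalar snu)).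
by move/(mulfI (invr_neq0 (lt0r_neq0 Lb0))).
Qed.

Definition rho_lipschitz b := forall mu nu (r : R), states mu -> states nu ->
  rho LE mu nu = r%:E -> `|mu b - nu b| <= r.

Lemma rho_lipschitz_ball b : L b <= 1 -> rho_lipschitz b.
Proof.
by move=> /(rho_ge _ _) b_le mu nu r _ _ rhoE; move: (b_le mu nu); rewrite rhoE lee_fin.
Qed.

(* States are norm continuous, so the pointwise bound passes to norm limits. *)
Lemma rho_lipschitz_closed : norm_closure le e rho_lipschitz `<=` rho_lipschitz.
Proof.
move=> b b_cl mu nu r smu snu rhoE.
have [C1 mu_bd] := state_bounded smu; have [C2 nu_bd] := state_bounded snu.
have mu_scalar := state_scalar smu; have nu_scalar := state_scalar snu.
apply/ler_addgt0Pr => eps eps0.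
pose d := eps / (`|C1| + `|C2| + 1).
have d0 : 0 < d by rewrite divr_gt0 // ltr_wpDl.
have Cd : (`|C1| + `|C2|) * d <= eps.
  by rewrite mulrA ler_pdivrMr ?ltr_wpDl //; nra.
have [b' b'_lip bb'] := b_cl d d0.
have state_small C (f : V -> R) : (forall a, `|f a| <= C * N a) -> `|f (b - b')| <= `|C| * d.
  move=> f_bd; apply: le_trans (f_bd _) _.
  apply: le_trans (ler_wpM2r (ou_norm_ge0 le e _) (ler_norm C)) _.
  by apply: ler_wpM2l; [exact: normr_ge0|exact: ltW].
have := state_small _ _ mu_bd; have := state_small _ _ nu_bd.
have := b'_lip _ _ _ smu snu rhoE.
rewrite (scalar_funB mu_scalar) (scalar_funB nu_scalar).
have -> : mu b - nu b = (mu b' - nu b') + ((mu b - mu b') - (nu b - nu b')) by lra.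
move=> h1 h2 h3; apply: le_trans (ler_normD _ _) _.
apply: le_trans (lerD h1 (ler_normB _ _)) _; lra.
Qed.

Lemma Lr_le1P b : (Lr b <= 1)%E <-> rho_lipschitz b.
Proof.
split=> [b_le mu nu r smu snu rhoE|b_lip].
- have := rho_ge0 smu snu; rewrite rhoE lee_fin => r0.
  have [r_eq0|r_neq0] := eqVneq r 0.
    by rewrite (rho_eq0 smu snu) ?subrr ?normr0 // rhoE r_eq0.
  have r_gt0 : 0 < r by rewrite lt_neqAle eq_sym r_neq0.
  have [<-|mu_nu] := pselect (mu = nu); first by rewrite subrr normr0.
  have : (quot (mu b - nu b) (rho LE mu nu) <= Lr b)%E.
    by apply: ereal_sup_ubound; right; exists mu, nu.
  by move=> /le_trans /(_ b_le); rewrite rhoE lee_fin ler_pdivrMr // mul1r.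
- apply: ge_ereal_sup => q [->|[mu [nu [smu snu _ ->]]]] //.
  have := rho_ge0 smu snu.
  case rhoE: (rho LE mu nu) => [r| |] //=; rewrite !lee_fin => r0.
  have := b_lip _ _ _ smu snu rhoE.
  have [->|r_neq0] := eqVneq r 0; first by rewrite invr0 mulr0.
  by rewrite ler_pdivrMr ?mul1r // lt_neqAle eq_sym r_neq0.
Qed.

Lemma Lr_ge0 a : (0 <= Lr a)%E.
Proof. by apply: ereal_sup_ubound; left. Qed.

Lemma LrD a b : (Lr (a + b) <= Lr a + Lr b)%E.
Proof.
apply: ge_ereal_sup => q [->|[mu [nu [smu snu mu_nu ->]]]].
  by apply: adde_ge0; apply: Lr_ge0.
have -> : mu (a + b) - nu (a + b) = (mu a - nu a) + (mu b - nu b).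
  by rewrite (scalar_funD (state_scalar smu)) (scalar_funD (state_scalar snu)); lra.
apply: le_trans (le_quotD _ _ (rho_ge0 smu snu)) _.
by apply: leeD; apply: ereal_sup_ubound; right; exists mu, nu.
Qed.

Lemma LrZ (t : R) a : Lr (t *: a) = (`|t|%:E * Lr a)%E.
Proof.
rewrite /Lr /L_of_rho -ereal_supZl //; last by apply/set0P; exists 0%E; left.
have quotZ mu nu : states mu -> states nu ->
    quot (mu (t *: a) - nu (t *: a)) (rho LE mu nu) =
    (`|t|%:E * quot (mu a - nu a) (rho LE mu nu))%E.
  move=> smu snu; rewrite -quotMl mulrBr.
  by rewrite (scalar_funZ (state_scalar smu)) (scalar_funZ (state_scalar snu)).
congr ereal_sup; apply/seteqP; split.
- move=> q [->|[mu [nu [smu snu mu_nu ->]]]]; first by exists 0%E; [left|rewrite mule0].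
  by rewrite quotZ //; exists (quot (mu a - nu a) (rho LE mu nu)) => //; right; exists mu, nu.
- move=> _ [q [->|[mu [nu [smu snu mu_nu ->]]]] <-]; first by left; rewrite mule0.
  by right; exists mu, nu; rewrite quotZ.
Qed.

Lemma Lr_le_lip a : (Lr a <= LE a)%E.
Proof.
have [La0|La_neq0] := eqVneq (L a) 0.
  have [s ->] := lip_eq0 L_lip La0.
  apply: ge_ereal_sup => q [->|[mu [nu [smu snu _ ->]]]].
    by rewrite /LE lee_fin (lip_ge0 L_lip).
  rewrite (scalar_funZ (state_scalar smu)) (scalar_funZ (state_scalar snu)).
  rewrite (state_unit smu) (state_unit snu) subrr /LE (lip_unit L_lip).
  by case: (rho _ _ _) => [r| |] //=; rewrite normr0 mul0r.
have La : 0 < L a by rewrite lt_neqAle eq_sym La_neq0 (lip_ge0 L_lip).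
have : (Lr ((L a)^-1 *: a) <= 1)%E.
  by apply/Lr_le1P/rho_lipschitz_ball; rewrite (lip_normalize L_lip La).
by rewrite LrZ ger0_norm ?invr_ge0 ?(ltW La) // lee_pdivrMl // mule1.
Qed.

Lemma Lr_seminorm : ext_seminorm Lr.
Proof. by split; [exact: Lr_ge0|exact: LrD|exact: LrZ]. Qed.

Lemma Lr_lsc : ou_lsc le e Lr.
Proof.
move=> a /(norm_closureS (fun b => proj1 (Lr_le1P b))) /rho_lipschitz_closed.
exact: (Lr_le1P a).2.
Qed.

Lemma closure_ball_sub_Lr_ball :
  norm_closure le e [set b | L b <= 1] `<=` [set b | (Lr b <= 1)%E].
Proof.
move=> a /(norm_closureS rho_lipschitz_ball) /rho_lipschitz_closed.
exact: (Lr_le1P a).2.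
Qed.

Section SeparatingGauge.
Variables (a : V) (k D : R).
Hypothesis D_ge0 : 0 <= D.
Hypothesis gap : forall y r, 0 <= r -> bounded_by le e r y -> k <= L (a - y) + D * r.

(* [separating_gauge x m] encodes [p x <= m] for the sublinear
   [p x = inf {L x1 + D r - l k | x = x1 + x2 - l a, 0 <= l, -r e <= x2 <= r e}];
   a linear functional below [p] is below [L] (take [x1 = x]), below [D] times
   the order-unit norm (take [x2 = x]) and at least [k] at [a] (take [l = 1]).
   The gap is exactly what makes [p 0 >= 0]. *)
Definition separating_gauge x m := exists x1 x2 l r, [/\ x = x1 + x2 - l *: a,
  0 <= l, 0 <= r, bounded_by le e r x2 & L x1 + D * r - l * k <= m].

Lemma separating_gauge_total x : exists m, separating_gauge x m.
Proof.
exists (L x + D * 0 - 0 * k), x, 0, 0, 0.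
by rewrite scale0r subr0 addr0; split => //; apply: bounded_by0.
Qed.

Lemma separating_gaugeD x y m n :
  separating_gauge x m -> separating_gauge y n -> separating_gauge (x + y) (m + n).
Proof.
move=> [x1 [x2 [l [r [-> l0 r0 x2_bd xm]]]]].
move=> [y1 [y2 [l' [r' [-> l0' r0' y2_bd yn]]]]].
exists (x1 + y1), (x2 + y2), (l + l'), (r + r'); split.
- by rewrite scalerDl opprD addrACA [x1 + x2 + _]addrACA.
- by rewrite addr_ge0.
- by rewrite addr_ge0.
- exact: bounded_byD.
- by have := lipD L_lip x1 y1; lra.
Qed.

Lemma separating_gaugeZ t x m :
  0 < t -> separating_gauge x m -> separating_gauge (t *: x) (t * m).
Proof.
move=> t0 [x1 [x2 [l [r [-> l0 r0 x2_bd xm]]]]].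
exists (t *: x1), (t *: x2), (t * l), (t * r); split.
- by rewrite !scalerDr scalerN scalerA.
- by rewrite mulr_ge0 // ltW.
- by rewrite mulr_ge0 // ltW.
- exact: bounded_byZ (ltW t0) x2_bd.
- by have := ler_wpM2l (ltW t0) xm; rewrite (lipZ L_lip) gtr0_norm //; lra.
Qed.

Lemma separating_gauge0_ge0 m : separating_gauge 0 m -> 0 <= m.
Proof.
move=> [x1 [x2 [l [r [x0E l0 r0 x2_bd xm]]]]].
have Dr : 0 <= D * r by rewrite mulr_ge0.
have [l_eq0|l_neq0] := eqVneq l 0.
  by move: xm; rewrite l_eq0 mul0r subr0; have := lip_ge0 L_lip x1; lra.
have l_gt0 : 0 < l by rewrite lt_neqAle eq_sym l_neq0.
have x1E : x1 = l *: (a - l^-1 *: x2).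
  rewrite scalerBr scalerA mulfV // scale1r.
  by apply/eqP; rewrite -subr_eq0 opprB addrA -x0E.
have il : 0 <= l^-1 by rewrite invr_ge0 ltW.
have Lx1 : L x1 = l * L (a - l^-1 *: x2) by rewrite x1E (lipZ L_lip) gtr0_norm.
have := gap (mulr_ge0 il r0) (bounded_byZ ous il x2_bd).
move=> /(ler_wpM2l (ltW l_gt0)); rewrite mulrDr mulrCA mulVKf ?gt_eqF //.
lra.
Qed.

Lemma separating_functional : 1 < k ->
  exists phi, [/\ scalar phi, (forall x, `|phi x| <= L x),
    (forall x r, 0 <= r -> bounded_by le e r x -> phi x <= D * r) & 1 < phi a].
Proof.
move=> k1; have [phi [phi_scalar phi_le]] := hahn_banach_dominated
  separating_gauge_total separating_gaugeD separating_gaugeZ separating_gauge0_ge0.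
have phi_L x : phi x <= L x.
  apply: le_trans (phi_le x (L x + D * 0 - 0 * k) _) _.
    by exists x, 0, 0, 0; rewrite scale0r subr0 addr0; split => //; apply: bounded_by0.
  by rewrite mulr0 mul0r addr0 subr0.
exists phi; split => //.
- move=> x; rewrite ler_norml phi_L andbT.
  by have := phi_L (- x); rewrite (scalar_funN phi_scalar) (lipN L_lip); lra.
- move=> x r r0 x_bd; apply: le_trans (phi_le x (L 0 + D * r - 0 * k) _) _.
    by exists 0, x, 0, r; rewrite scale0r subr0 add0r.
  by rewrite (lip0 L_lip) mul0r subr0 add0r.
- have : separating_gauge (- a) (L 0 + D * 0 - 1 * k).
    by exists 0, 0, 1, 0; rewrite scale1r !add0r; split => //; apply: bounded_by0.
  by move/phi_le; rewrite (scalar_funN phi_scalar) (lip0 L_lip) mulr0 mul1r; lra.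
Qed.

End SeparatingGauge.

Section PositiveUnit.
Hypothesis e_ge0 : le 0 e.

Lemma separation_gap a eps : 0 < eps -> (forall b, L b <= 1 -> eps <= N (a - b)) ->
  exists k D, [/\ 1 < k, 0 <= D &
    forall y r, 0 <= r -> bounded_by le e r y -> k <= L (a - y) + D * r].
Proof.
move=> eps0 far; have [ra ra0 a_bd] := bounded_by_exists ous e_ge0 a.
(* If the gap failed at [y], then [b = (a - y) / k] would be in the unit ball
   of [L] and, by the choice of [al] and [D], closer than [eps] to [a]. *)
pose al := eps / (2 * (ra + eps + 1)).
have al0 : 0 < al by rewrite divr_gt0 //; lra.
have alE : al * (2 * (ra + eps + 1)) = eps by rewrite mulfVK // gt_eqF //; lra.
have al_eps : 0 < al * eps by rewrite mulr_gt0.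
have al_ra : 0 <= al * ra by rewrite mulr_ge0 // ltW.
have al_ra_lt : al * ra < eps / 2 by lra.
have al1 : al < 1.
  by rewrite ltNge; apply/negP => al_ge1; move: (ler_peMl (ltW eps0) al_ge1); lra.
have oal : 0 < 1 - al by lra.
pose k := (1 - al)^-1; pose D := 2 / eps.
have kE : (1 - al) * k = 1 by rewrite mulfV ?gt_eqF.
have DE : eps / 2 * D = 1 by rewrite /D mulrA divfK ?pnatr_eq0 // mulfV ?gt_eqF.
exists k, D; split; first by rewrite invf_gt1 //; lra.
  by rewrite divr_ge0 // ltW.
move=> y r r0 y_bd; rewrite leNgt; apply/negP => gap.
have Lay := lip_ge0 L_lip (a - y).
have Dr : 0 <= D * r by rewrite mulr_ge0 // divr_ge0 // ltW.
pose b := (1 - al) *: (a - y).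
have Lb : L b <= 1.
  rewrite (lipZ L_lip) ger0_norm ?(ltW oal) // -[X in _ <= X]kE ler_pM2l //; lra.
have abE : a - b = al *: a + (1 - al) *: y.
  rewrite /b scalerBr opprB addrCA -{1}[a]scale1r -scalerBl.
  by rewrite opprB addrCA subrr addr0 addrC.
have rE : r = eps / 2 * (D * r) by rewrite mulrA DE mul1r.
have r_lt : r < eps / 2 * k by rewrite {1}rE ltr_pM2l ?divr_gt0 //; lra.
have r_small : (1 - al) * r < eps / 2.
  have : (1 - al) * r < (1 - al) * (eps / 2 * k) by rewrite ltr_pM2l.
  by rewrite mulrCA kE mulr1.
have := far b Lb; rewrite leNgt abE => /negP; apply.
have ab_bd := bounded_byD ous (bounded_byZ ous (ltW al0) a_bd) (bounded_byZ ous (ltW oal) y_bd).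
apply: le_lt_trans (ou_norm_le _ ab_bd) _; last by lra.
by rewrite addr_ge0 // mulr_ge0 // ltW.
Qed.

Lemma states_far_apart phi D a : scalar phi -> (forall x, `|phi x| <= L x) ->
  (forall x r, 0 <= r -> bounded_by le e r x -> phi x <= D * r) -> 1 < phi a ->
  exists mu nu (r : R),
    [/\ states mu, states nu, rho LE mu nu = r%:E & r < `|mu a - nu a|].
Proof.
move=> phi_scalar phi_L phi_bd phi_a.
have [psi psi_scalar [psi_pos chi_pos]] :=
  bounded_functional_split ous e_ge0 phi_scalar phi_bd.
set chi := fun x => psi x - phi x in chi_pos.
have chi_scalar : scalar chi by move=> t x y; rewrite /chi psi_scalar phi_scalar; lra.
have phi_e : phi e = 0.
  by apply/eqP; rewrite -normr_le0 -(lip_unit L_lip 1) scale1r phi_L.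
have chi_e : chi e = psi e by rewrite /chi phi_e subr0.
have psi_e : 0 < psi e.
  rewrite lt_neqAle eq_sym (positive_unit_ge0 ous e_ge0 psi_scalar psi_pos) andbT.
  apply/negP => /eqP psi_e0; have [ra _ a_bd] := bounded_by_exists ous e_ge0 a.
  have := positive_bound ous psi_scalar psi_pos a_bd.
  have := positive_bound ous chi_scalar chi_pos a_bd.
  rewrite chi_e psi_e0 mulr0 !normr_le0 /chi => /eqP chi_a /eqP psi_a; lra.
have chi_e_gt0 : 0 < chi e by rewrite chi_e.
pose mu x := psi x / psi e; pose nu x := chi x / chi e.
have smu : states mu := state_of_positive ous e_ge0 psi_scalar psi_pos psi_e.
have snu : states nu := state_of_positive ous e_ge0 chi_scalar chi_pos chi_e_gt0.
have mu_nu x : mu x - nu x = phi x / psi e.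
  by rewrite /mu /nu chi_e -mulrBl /chi opprB addrC subrK.
have rho_le : (rho LE mu nu <= (psi e)^-1%:E)%E.
  apply: ge_ereal_sup => _ [x /= Lx <-]; rewrite /LE lee_fin in Lx.
  rewrite mu_nu lee_fin normrM normfV (gtr0_norm psi_e) -[X in _ <= X]mul1r.
  by apply: ler_wpM2r; [rewrite invr_ge0 ltW|exact: le_trans (phi_L x) Lx].
move: (rho_ge0 smu snu) rho_le.
case rhoE: (rho LE mu nu) => [r| |] // _; rewrite ?leye_eq // lee_fin => r_le.
exists mu, nu, r; split => //.
rewrite mu_nu normrM normfV (gtr0_norm psi_e); apply: le_lt_trans r_le _.
by rewrite ltr_pMl ?invr_gt0 //; apply: lt_le_trans phi_a (ler_norm _).
Qed.

End PositiveUnit.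

Lemma Lr_ball_sub_closure :
  [set b | (Lr b <= 1)%E] `<=` norm_closure le e [set b | L b <= 1].
Proof.
move=> a /Lr_le1P a_lip eps eps0; apply: contrapT => not_close.
have far b : L b <= 1 -> eps <= N (a - b).
  by move=> Lb; rewrite leNgt; apply/negP => ab; apply: not_close; exists b.
have [e_ge0|e_not_ge0] := pselect (le 0 e); last first.
  move: (far 0); rewrite (lip0 L_lip) ler01 (ou_norm_degenerate ous _ e_not_ge0).
  by move=> /(_ isT); lra.
have [k [D [k1 D0 gap]]] := separation_gap e_ge0 eps0 far.
have [phi [phi_scalar phi_L phi_bd phi_a]] := separating_functional D0 gap k1.
have [mu [nu [r [smu snu rhoE far_a]]]] :=
  states_far_apart e_ge0 phi_scalar phi_L phi_bd phi_a.
by have := a_lip _ _ _ smu snu rhoE; rewrite leNgt far_a.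
Qed.

Lemma Lr_ball : [set b | (Lr b <= 1)%E] = norm_closure le e [set b | L b <= 1].
Proof.
by apply/seteqP; split; [exact: Lr_ball_sub_closure|exact: closure_ball_sub_Lr_ball].
Qed.

Lemma Lr_greatest M : ext_seminorm M -> ou_lsc le e M -> (forall a, (M a <= LE a)%E) ->
  forall a, (M a <= Lr a)%E.
Proof.
move=> [M_ge0 _ MZ] M_lsc M_le a.
have ball_sub b : (Lr b <= 1)%E -> (M b <= 1)%E.
  move=> /Lr_ball_sub_closure Lrb; apply: M_lsc; apply: norm_closureS Lrb => c /= Lc.
  by apply: le_trans (M_le c) _; rewrite /LE lee_fin.
have M_fin : M a \is a fin_num.
  by rewrite ge0_fin_numE // (le_lt_trans (M_le a)) ?ltey.
have Lr_fin : Lr a \is a fin_num.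
  by rewrite ge0_fin_numE ?Lr_ge0 // (le_lt_trans (Lr_le_lip a)) ?ltey.
have Lr_a0 : 0 <= fine (Lr a) by rewrite fine_ge0 ?Lr_ge0.
rewrite -(fineK M_fin) -(fineK Lr_fin) lee_fin; apply/ler_addgt0Pr => d d0.
have c_gt0 : 0 < fine (Lr a) + d by lra.
have := ball_sub ((fine (Lr a) + d)^-1 *: a).
rewrite MZ LrZ ger0_norm ?invr_ge0 ?(ltW c_gt0) // !lee_pdivrMl // !mule1.
rewrite -(fineK M_fin) -(fineK Lr_fin) !lee_fin; apply.
by rewrite lerDl ltW.
Qed.

Lemma rho_Lr mu nu : states mu -> states nu -> rho Lr mu nu = rho LE mu nu.
Proof.
move=> smu snu; apply/le_anti/andP; split.
- apply: ge_ereal_sup => _ [b /Lr_le1P b_lip <-].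
  move: (rho_ge0 smu snu); case rhoE: (rho LE mu nu) => [r| |] // _; last exact: leey.
  by rewrite lee_fin; apply: b_lip rhoE.
- apply: ereal_sup_le => _ [b Lb <-]; exists b => //.
  exact: le_trans (Lr_le_lip b) Lb.
Qed.

End LipschitzDual.

Unset Implicit Arguments.

Theorem theorem4p2 (R : realType) (V : lmodType R) (le : V -> V -> Prop) (e : V)
  (L : V -> R) :
  order_unit_space le e -> lipschitz_seminorm e L ->
  let LE := fun a => (L a)%:E in
  let Lr := L_of_rho le e (rho LE) in
  [/\ [set a | (Lr a <= 1)%E] = norm_closure le e [set a | L a <= 1],
      [/\ ext_seminorm Lr, ou_lsc le e Lr,
          (forall a, (Lr a <= LE a)%E) &
          (forall M : V -> \bar R, ext_seminorm M -> ou_lsc le e M ->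
             (forall a, (M a <= LE a)%E) -> forall a, (M a <= Lr a)%E)] &
      (forall mu nu, mu \in states le e -> nu \in states le e ->
         rho Lr mu nu = rho LE mu nu)].
Proof.
move=> ous L_lip LE Lr; split; first exact: Lr_ball.
- split; [exact: Lr_seminorm|exact: Lr_lsc|exact: Lr_le_lip|exact: Lr_greatest].
- by move=> mu nu; rewrite !inE; apply: rho_Lr.
Qed.
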